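(* For a weakly coupled POMDP and horizon $T$, let $(\tau^m,\delta^m)_{m\in[M]}$ be an optimal solution of MILP (LB). Then the policy $\delta$ defined by $\delta^t_{\mathbf a|\mathbf o}=\prod_{m=1}^M\delta^{t,m}_{a^m|o^m}$ is an optimal deterministic decomposable policy for the weakly coupled POMDP problem with memoryless policies. Furthermore, MILP (IP) is a relaxation of MILP (LB) (every feasible solution of (LB) yields a feasible solution of (IP) with the same objective value). In particular $z_{\mathrm{LB}}\le v^*_{\mathrm{ml}}$ and $z_{\mathrm{LB}}\le z_{\mathrm{IP}}$.
   Context: Weakly coupled POMDP: components $m\in[M]$, each a POMDP $(\mathcal X_S^m,\mathcal X_O^m,\mathcal X_A^m,\mathfrak p^m,\mathbf r^m)$ with initial distribution $p^m(s)$, emissions $p^m(o|s)$, transitions $p^m(s'|s,a)$, reward $r^m(s,a,s')$; $\mathbf D^m:\mathcal X_A^m\to\mathbb R^q$, $\mathbf b\in\mathbb R^q_{\ge0}$. Full system: $\mathcal X_S=\prod_m\mathcal X_S^m$, $\mathcal X_O=\prod_m\mathcal X_O^m$, $\mathcal X_A=\{\mathbf a\in\prod_m\mathcal X_A^m:\sum_m\mathbf D^m(a^m)\le\mathbf b\}$ (nonempty), product initial/emission/transition probabilities and additive reward $r=\sum_m r^m$. A memoryless policy $\delta^t_{\mathbf a|\mathbf o}$ ($\mathbf a\in\mathcal X_A$) is a conditional distribution on $\mathcal X_A$ for each $\mathbf o,t$; $v^*_{\mathrm{ml}}$ is the maximum over these of $\mathbb E_\delta[\sum_{t=1}^T r(\mathbf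 S_t,\mathbf A_t,\mathbf S_{t+1})]$. A policy is decomposable if $\delta^t_{\mathbf a|\mathbf o}=\prod_m\delta^{t,m}_{a^m|o^m}$ for memoryless policies $\delta^m$ on component $m$, and deterministic if it takes values in $\{0,1\}$. For a POMDP, $\mathcal Q^{\mathrm d}(T,\mathcal X_S,\mathcal X_O,\mathcal X_A,\mathfrak p)$ is the set of $(\tau,\delta)$ with $\delta^t_{a|o}\in\{0,1\}$, $\sum_a\delta^t_{a|o}=1$, nonnegative $\tau$ satisfying (i) $\tau^1_s=p(s)$; (ii) $\sum_{o,a}\tau^t_{soa}=\nu^t_s$, $\nu^1_s=\tau^1_s$, $\nu^t_s=\sum_{s'',a''}\tau^{t-1}_{s''a''s}$; (iii) $\sum_{\bar s}\tau^t_{sa\bar s}=\sum_o\tau^t_{soa}$; (iv) $\tau^t_{sas'}=p(s'|s,a)\sum_{\bar s}\tau^t_{sa\bar s}$; (McCormick) $\tau^t_{soa}\le p(o|s)\nu^t_s$, $\tau^t_{soa}\le\delta^t_{a|o}$, $\tau^t_{soa}\ge p(o|s)\nu^t_s+\delta^t_{a|o}-1$. MILP (IP): maximize $\sum_t\sum_m\sum_{s,a,s'}r^m(s,a,s')\tau^{t,m}_{sas'}$ s.t. $(\tau^m,\delta^m)\in\mathcal Q^{\mathrm d}(T,\mathcal X_S^m,\mathcal X_O^m,\mathcal X_A^m,\mathfrak p^m)$ for all $m$, $\tau^{t,m}_a=\sum_{s,o}\tau^{t,m}_{soa}$, $\sum_m\sum_a\mathbf D^m(a)\tau^{t,m}_a\le\mathbf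 b$ for all $t$; value $z_{\mathrm{IP}}$. MILP (LB): same objective, s.t. $(\tau^m,\delta^m)\in\mathcal Q^{\mathrm d}(T,\mathcal X_S^m,\mathcal X_O^m,\mathcal X_A^m,\mathfrak p^m)$ for all $m$ and $\sum_m\sum_{a\in\mathcal X_A^m}\mathbf D^m(a)\delta^{t,m}_{a|o^m}\le\mathbf b$ for all $\mathbf o\in\mathcal X_O$, $t\in[T]$; value $z_{\mathrm{LB}}$. *)

From HB Require Import structures.
From mathcomp Require Import all_boot all_order all_algebra.
Set Implicit Arguments. Unset Strict Implicit. Unset Printing Implicit Defensive.
Import Order.TTheory GRing.Theory Num.Theory.
Local Open Scope ring_scope.

(* Conventions: time steps t = 1..T of the paper are indexed by t = 0..T-1 (nat);
   vectors of R^q are functions 'I_q -> R with componentwise order. *)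

Section Pomdp.
Variable R : realFieldType.
Variables (S O A : finType).

(* initial distribution, emission p(o|s), transition p(s'|s,a), reward r(s,a,s') *)
Variables (p0 : S -> R) (pe : S -> O -> R) (pt : S -> A -> S -> R)
          (rw : S -> A -> S -> R).

Definition is_distr (f : S -> R) := (forall s, 0 <= f s) /\ \sum_s f s = 1.

Definition is_pomdp :=
  is_distr p0 /\
  (forall s, (forall o, 0 <= pe s o) /\ \sum_o pe s o = 1) /\
  (forall s a, (forall s', 0 <= pt s a s') /\ \sum_s' pt s a s' = 1).

Definition memoryless_policy (T : nat) (del : nat -> O -> A -> R) :=
  forall t, (t < T)%N ->
    forall o, (forall a, 0 <= del t o a) /\ \sum_a del t o a = 1.

Definition deterministic_policy (T : nat) (del : nat -> O -> A -> R) :=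
  forall t, (t < T)%N -> forall o a, del t o a = 0 \/ del t o a = 1.

Definition traj_prob (T : nat) (del : nat -> O -> A -> R)
  (s : {ffun 'I_T.+1 -> S}) (o : {ffun 'I_T -> O}) (a : {ffun 'I_T -> A}) : R :=
  p0 (s ord0) *
  \prod_(t < T) (pe (s (widen_ord (leqnSn T) t)) (o t) * del t (o t) (a t)
                 * pt (s (widen_ord (leqnSn T) t)) (a t) (s (lift ord0 t))).

Definition policy_value (T : nat) (del : nat -> O -> A -> R) : R :=
  \sum_(s : {ffun 'I_T.+1 -> S}) \sum_(o : {ffun 'I_T -> O})
   \sum_(a : {ffun 'I_T -> A})
    traj_prob del s o a *
    \sum_(t < T) rw (s (widen_ord (leqnSn T) t)) (a t) (s (lift ord0 t)).

Record Qvars := mkQvars {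
  q_ts   : S -> R;
  q_tsoa : nat -> S -> O -> A -> R;
  q_tsas : nat -> S -> A -> S -> R;
  q_del  : nat -> O -> A -> R
}.

Definition q_nu (x : Qvars) (t : nat) (s : S) : R :=
  if t is t'.+1 then \sum_(s'' : S) \sum_(a'' : A) q_tsas x t' s'' a'' s
  else q_ts x s.

Definition in_Qd (T : nat) (x : Qvars) : Prop :=
  (forall t, (t < T)%N -> forall o,
      (forall a, q_del x t o a = 0 \/ q_del x t o a = 1) /\
      \sum_a q_del x t o a = 1) /\
  (forall s, 0 <= q_ts x s) /\
  (forall t, (t < T)%N -> forall s o a, 0 <= q_tsoa x t s o a) /\
  (forall t, (t < T)%N -> forall s a s', 0 <= q_tsas x t s a s') /\
  (forall s, q_ts x s = p0 s) /\
  (forall t, (t < T)%N -> forall s,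
      \sum_o \sum_a q_tsoa x t s o a = q_nu x t s) /\
  (forall t, (t < T)%N -> forall s a,
      \sum_sb q_tsas x t s a sb = \sum_o q_tsoa x t s o a) /\
  (forall t, (t < T)%N -> forall s a s',
      q_tsas x t s a s' = pt s a s' * \sum_sb q_tsas x t s a sb) /\
  (* McCormick *)
  (forall t, (t < T)%N -> forall s o a,
      q_tsoa x t s o a <= pe s o * q_nu x t s /\
      q_tsoa x t s o a <= q_del x t o a /\
      pe s o * q_nu x t s + q_del x t o a - 1 <= q_tsoa x t s o a).

End Pomdp.

Section Weakly.
Variable R : realFieldType.
Variables (M q : nat) (S O A : 'I_M -> finType).
Variables (p0 : forall m, S m -> R) (pe : forall m, S m -> O m -> R)
          (pt : forall m, S m -> A m -> S m -> R)
          (rw : forall m, S m -> A m -> S m -> R)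
          (D : forall m, A m -> 'I_q -> R) (b : 'I_q -> R).

Definition jstate := {dffun forall m, S m}.
Definition jobs := {dffun forall m, O m}.
Definition jact := {dffun forall m, A m}.

Definition feasible_action (a : jact) : bool :=
  [forall i : 'I_q, \sum_(m < M) D (a m) i <= b i].

Definition XA := {a : jact | feasible_action a}.

Definition full_p0 (s : jstate) : R := \prod_(m < M) p0 (s m).
Definition full_pe (s : jstate) (o : jobs) : R := \prod_(m < M) pe (s m) (o m).
Definition full_pt (s : jstate) (a : XA) (s' : jstate) : R :=
  \prod_(m < M) pt (s m) (val a m) (s' m).
Definition full_rw (s : jstate) (a : XA) (s' : jstate) : R :=
  \sum_(m < M) rw (s m) (val a m) (s' m).

Definition full_value (T : nat) (del : nat -> jobs -> XA -> R) : R :=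
  policy_value full_p0 full_pe full_pt full_rw T del.

Definition full_policy (T : nat) (del : nat -> jobs -> XA -> R) :=
  memoryless_policy T del.

Definition decomposable (T : nat) (del : nat -> jobs -> XA -> R) :=
  exists delm : forall m, nat -> O m -> A m -> R,
    (forall m, memoryless_policy T (delm m)) /\
    forall t, (t < T)%N -> forall o a,
      del t o a = \prod_(m < M) delm m t (o m) (val a m).

Definition sol := forall m, Qvars R (S m) (O m) (A m).

Definition milp_obj (T : nat) (x : sol) : R :=
  \sum_(t < T) \sum_(m < M) \sum_(s : S m) \sum_(a : A m) \sum_(s' : S m)
     rw s a s' * q_tsas (x m) t s a s'.

Definition IP_feasible (T : nat) (x : sol) : Prop :=
  (forall m, in_Qd (@p0 m) (@pe m) (@pt m) T (x m)) /\
  forall t, (t < T)%N -> forall i : 'I_q,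
    \sum_(m < M) \sum_(a : A m)
       D a i * (\sum_(s : S m) \sum_(o : O m) q_tsoa (x m) t s o a) <= b i.

Definition LB_feasible (T : nat) (x : sol) : Prop :=
  (forall m, in_Qd (@p0 m) (@pe m) (@pt m) T (x m)) /\
  forall (o : jobs) t, (t < T)%N -> forall i : 'I_q,
    \sum_(m < M) \sum_(a : A m) D a i * q_del (x m) t (o m) a <= b i.

Definition product_policy (x : sol) : nat -> jobs -> XA -> R :=
  fun t o a => \prod_(m < M) q_del (x m) t (o m) (val a m).

End Weakly.

From HB Require Import structures.
From mathcomp Require Import all_boot all_order all_algebra.
From mathcomp Require Import ring lra.
Import Order.TTheory GRing.Theory Num.Theory.
Set Implicit Arguments. Unset Strict Implicit. Unset Printing Implicit Defensive.
Local Open Scope ring_scope.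

(* The argument rests on three facts.
   1. For a single POMDP and a memoryless policy, the expected total reward is
      the reward integrated against the transition marginals tau^t, obtained
      from the forward recursion for the state marginals nu^t
      (policy_value_transitions).
   2. In a point of Q^d the policy is binary, so the McCormick constraints are
      exact and the whole point is the (nu, tau) of its policy (Qd_tsas_eq);
      conversely every deterministic policy gives such a point
      (policy_point_in_Qd).
   3. For an (LB)-feasible point the product of the component policies never
      plays an infeasible joint action (LB_feasible_blocked); hence the full
      marginals are products of the component ones and the value of the product
      policy is the MILP objective (full_value_product).
   Optimality then follows since every deterministic decomposable policy is the
   product policy of an (LB)-feasible point (decomposable_value), and (LB) implies
   (IP) because the expected resource usage of a component is an average over
   observations of its usage at a single observation
   (LB_feasible_IP_feasible). *)

Lemma widen_ord_lift_max n (j : 'I_n) : widen_ord (leqnSn n) j = lift ord_max j.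
Proof. by apply: val_inj; rewrite /= /bump leqNgt ltn_ord. Qed.

Section Snoc.
Variable X : finType.

Definition snoc n (g : {ffun 'I_n -> X}) (x : X) : {ffun 'I_n.+1 -> X} :=
  [ffun i => if unlift ord_max i is Some j then g j else x].

Lemma snoc_last n (g : {ffun 'I_n -> X}) x : snoc g x ord_max = x.
Proof. by rewrite ffunE unlift_none. Qed.

Lemma snoc_widen n (g : {ffun 'I_n -> X}) x j : snoc g x (widen_ord (leqnSn n) j) = g j.
Proof. by rewrite widen_ord_lift_max ffunE liftK. Qed.

Lemma snoc_first n (g : {ffun 'I_n.+1 -> X}) x : snoc g x ord0 = g ord0.
Proof. by rewrite -(snoc_widen g x ord0); congr (snoc g x _); apply: val_inj. Qed.

Lemma snoc_next n (g : {ffun 'I_n.+1 -> X}) x (j : 'I_n) :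
  snoc g x (lift ord0 (widen_ord (leqnSn n) j)) = g (lift ord0 j).
Proof.
by rewrite -(snoc_widen g x (lift ord0 j)); congr (snoc g x _); apply: val_inj.
Qed.

Lemma snoc_next_last n (g : {ffun 'I_n.+1 -> X}) x : snoc g x (lift ord0 ord_max) = x.
Proof. by rewrite -[RHS](snoc_last g x); congr (snoc g x _); apply: val_inj. Qed.

Lemma sum_snoc (V : nmodType) n (F : {ffun 'I_n.+1 -> X} -> V) :
  \sum_f F f = \sum_(g : {ffun 'I_n -> X}) \sum_x F (snoc g x).
Proof.
rewrite pair_big /= (reindex (fun p : {ffun 'I_n -> X} * X => snoc p.1 p.2)) //.
exists (fun f : {ffun 'I_n.+1 -> X} => ([ffun j : 'I_n => f (lift ord_max j)], f ord_max)).
  move=> [g x] _ /=; rewrite snoc_last; congr (_, _).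
  by apply/ffunP => j; rewrite !ffunE liftK.
move=> f _; apply/ffunP => i; rewrite ffunE.
by case: unliftP => [j ->|->]; rewrite ?ffunE.
Qed.

Lemma sum_ffun_ord0 (V : nmodType) (F : {ffun 'I_0 -> X} -> V) (f0 : {ffun 'I_0 -> X}) :
  \sum_f F f = F f0.
Proof.
by rewrite (big_pred1 f0) // => f; apply/esym/eqP/ffunP; case.
Qed.
End Snoc.

Section Sums.
Variable R : realFieldType.

Lemma sum_dffun_prod (I : finType) (T_ : I -> finType) (F : forall i, T_ i -> R) :
  \sum_(f : {dffun forall i, T_ i}) \prod_i F i (f i) = \prod_i \sum_(x : T_ i) F i x.
Proof.
rewrite (reindex (@dffun_of_fprod I T_)); last exact/onW_bij/dffun_of_fprod_bij.
pose P_ i := [ffun x : T_ i => F i x].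
transitivity (\sum_(t : fprod T_) \prod_(i in I) P_ i (t i)).
  by apply: eq_bigr => t _; apply: eq_bigr => i _; rewrite !ffunE.
rewrite (@big_fprod R 0 1 *%R +%R I T_ P_).
rewrite -(bigA_distr_big_dep (tagged_with T_) (fun i j => untag 0 (P_ i) j)).
apply: eq_bigr => i _; rewrite (big_tag (fun i x => F i x) i); apply: eq_bigr => j _.
by case: (eqVneq (tag j) i) => e; [rewrite !untagE ffunE | rewrite !untag_dflt].
Qed.

Lemma sum_prod3_marginal (I : finType) (X Y Z : I -> finType)
    (F g : forall i, X i -> Y i -> Z i -> R) (i0 : I) :
  (forall i, i != i0 -> \sum_x \sum_y \sum_z F i x y z = 1) ->
  \sum_(x : {dffun forall i, X i}) \sum_(y : {dffun forall i, Y i})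
    \sum_(z : {dffun forall i, Z i})
      g i0 (x i0) (y i0) (z i0) * \prod_i F i (x i) (y i) (z i)
  = \sum_x \sum_y \sum_z g i0 x y z * F i0 x y z.
Proof.
move=> F1.
pose G i x y z := F i x y z * (if i == i0 then g i x y z else 1).
have split_g x y z : g i0 (x i0) (y i0) (z i0) * \prod_i F i (x i) (y i) (z i)
    = \prod_i G i (x i) (y i) (z i).
  rewrite /G big_split /= mulrC; congr (_ * _).
  by rewrite (bigD1 i0) //= eqxx big1 ?mulr1 // => i /negbTE ->.
under eq_bigr => x _ do under eq_bigr => y _ do under eq_bigr => z _ do rewrite split_g.
under eq_bigr => x _ do under eq_bigr => y _ do rewrite (sum_dffun_prod (fun i => G i (x i) (y i))).
under eq_bigr => x _ do rewrite (sum_dffun_prod (fun i yi => \sum_z G i (x i) yi z)).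
rewrite (sum_dffun_prod (fun i xi => \sum_y \sum_z G i xi y z)) (bigD1 i0) //=.
rewrite [X in _ * X]big1 ?mulr1 => [|i ne]; rewrite /G.
  rewrite eqxx; apply: eq_bigr => x _; apply: eq_bigr => y _.
  by apply: eq_bigr => z _; rewrite mulrC.
rewrite (negbTE ne) -[RHS](F1 i ne); apply: eq_bigr => x _; apply: eq_bigr => y _.
by apply: eq_bigr => z _; rewrite mulr1.
Qed.

Lemma le_sum_term (X : finType) (f : X -> R) x0 :
  (forall x, 0 <= f x) -> f x0 <= \sum_x f x.
Proof. by move=> f_ge0; rewrite (bigD1 x0) //= lerDl sumr_ge0. Qed.

Lemma point_mass (X : finType) (f : X -> R) x0 : (forall x, 0 <= f x) ->
  \sum_x f x = 1 -> f x0 = 1 -> forall x, f x = (x == x0)%:R.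
Proof.
move=> f_ge0 f_sum1 f_x0 x; case: (eqVneq x x0) => [->|ne] //.
have rest0 : \sum_(y | y != x0) f y = 0.
  by move: f_sum1; rewrite (bigD1 x0) //= f_x0 => /(canRL (addKr 1)); rewrite addNr.
exact: (psumr_eq0P (fun y _ => f_ge0 y) rest0).
Qed.

Lemma sum_mul_point_mass (X : finType) (g : X -> R) x0 :
  \sum_x g x * (x == x0)%:R = g x0.
Proof.
by rewrite (bigD1 x0) //= eqxx mulr1 big1 ?addr0 // => x /negbTE ->; rewrite mulr0.
Qed.

Lemma prod_unit_interval_eq1 (I : finType) (f : I -> R) :
  (forall i, 0 <= f i <= 1) -> \prod_i f i = 1 -> forall i, f i = 1.
Proof.
move=> f01 prod1 i; apply: le_anti; have /andP[f0 ->] := f01 i.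
rewrite -prod1 (bigD1 i) //=; apply: ler_piMr => //.
by apply: prodr_ile1 => j _; exact: f01.
Qed.

Lemma nonzero_term_of_sum1 (X : finType) (f : X -> R) :
  \sum_x f x = 1 -> exists x, f x != 0.
Proof.
move=> sum1; case: (pickP (fun x => f x != 0)) => [x nz|all0]; first by exists x.
move: sum1; rewrite big1 => [/eqP|x _]; first by rewrite eq_sym oner_eq0.
by apply/eqP; exact: negbFE (all0 x).
Qed.

Lemma convex_comb_le_max (X : finType) (w f : X -> R) :
  (forall x, 0 <= w x) -> \sum_x w x = 1 ->
  exists x0, \sum_x w x * f x <= f x0.
Proof.
move=> w_ge0 w_sum1; have [x0 _] := nonzero_term_of_sum1 w_sum1.
exists [arg max_(x > x0) f x]%O.
case: (Order.TotalTheory.arg_maxP f (i0 := x0) (P := xpredT)) => // y _ y_max.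
rewrite -[f y]mul1r -w_sum1 mulr_suml; apply: ler_sum => x _.
by apply: ler_wpM2l => //; exact: y_max.
Qed.
End Sums.

Section PolicyDynamics.
Variable R : realFieldType.
Variables (S O A : finType).
Variables (p0 : S -> R) (pe : S -> O -> R) (pt : S -> A -> S -> R) (rw : S -> A -> S -> R).
Variables (T : nat) (del : nat -> O -> A -> R).
Hypothesis Hpomdp : is_pomdp p0 pe pt.
Hypothesis Hdel : memoryless_policy T del.

Lemma p0_ge0 s : 0 <= p0 s. Proof. by case: Hpomdp => [[]]. Qed.
Lemma p0_sum1 : \sum_s p0 s = 1. Proof. by case: Hpomdp => [[]]. Qed.
Lemma pe_ge0 s o : 0 <= pe s o. Proof. by case: Hpomdp => _ [/(_ s) []]. Qed.
Lemma pe_sum1 s : \sum_o pe s o = 1. Proof. by case: Hpomdp => _ [/(_ s) []]. Qed.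
Lemma pt_ge0 s a s' : 0 <= pt s a s'. Proof. by case: Hpomdp => _ [_ /(_ s a) []]. Qed.
Lemma pt_sum1 s a : \sum_s' pt s a s' = 1. Proof. by case: Hpomdp => _ [_ /(_ s a) []]. Qed.
Lemma del_ge0 t : (t < T)%N -> forall o a, 0 <= del t o a.
Proof. by move=> tT o; case: (Hdel tT o). Qed.
Lemma del_sum1 t : (t < T)%N -> forall o, \sum_a del t o a = 1.
Proof. by move=> tT o; case: (Hdel tT o). Qed.

Definition step_weight t s o a s' := pe s o * del t o a * pt s a s'.

(* The forward recursion for the state marginals nu^t_s = P(S_t = s) ... *)
Fixpoint state_marginal (t : nat) : S -> R := fun s' =>
  if t is t'.+1 then
    \sum_s \sum_a (pt s a s' * \sum_o (pe s o * state_marginal t' s * del t' o a))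
  else p0 s'.

(* ... and tau^t_{sas'} = P(S_t = s, A_t = a, S_{t+1} = s'). *)
Definition transition_marginal t s a s' :=
  pt s a s' * \sum_o (pe s o * state_marginal t s * del t o a).

Lemma traj_prob_snoc n (s : {ffun 'I_n.+1 -> S}) x (o : {ffun 'I_n -> O}) o' a a' :
  traj_prob p0 pe pt del (snoc s x) (snoc o o') (snoc a a') =
  traj_prob p0 pe pt del s o a * step_weight n (s ord_max) o' a' x.
Proof.
rewrite /traj_prob big_ord_recr /= mulrA snoc_first; congr (_ * _).
  by congr (_ * _); apply: eq_bigr => j _; rewrite !snoc_widen snoc_next.
by rewrite !snoc_widen snoc_next_last !snoc_last.
Qed.

Lemma sum_traj_snoc (V : nmodType) n
    (F : {ffun 'I_n.+2 -> S} -> {ffun 'I_n.+1 -> O} -> {ffun 'I_n.+1 -> A} -> V) :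
  \sum_s \sum_o \sum_a F s o a =
  \sum_(s : {ffun 'I_n.+1 -> S}) \sum_(o : {ffun 'I_n -> O}) \sum_(a : {ffun 'I_n -> A})
    \sum_x \sum_o' \sum_a' F (snoc s x) (snoc o o') (snoc a a').
Proof.
rewrite sum_snoc; apply: eq_bigr => s _.
under eq_bigr => x _ do rewrite sum_snoc.
rewrite exchange_big; apply: eq_bigr => o _.
under eq_bigr => x _ do under eq_bigr => o' _ do rewrite sum_snoc.
under eq_bigr => x _ do rewrite exchange_big.
by rewrite exchange_big.
Qed.

Lemma traj_expect_snoc n
    (F : {ffun 'I_n.+2 -> S} -> {ffun 'I_n.+1 -> O} -> {ffun 'I_n.+1 -> A} -> R) :
  \sum_s \sum_o \sum_a traj_prob p0 pe pt del s o a * F s o a =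
  \sum_(s : {ffun 'I_n.+1 -> S}) \sum_(o : {ffun 'I_n -> O}) \sum_(a : {ffun 'I_n -> A})
    traj_prob p0 pe pt del s o a *
    \sum_x \sum_o' \sum_a' step_weight n (s ord_max) o' a' x *
                           F (snoc s x) (snoc o o') (snoc a a').
Proof.
rewrite sum_traj_snoc; apply: eq_bigr => s _; apply: eq_bigr => o _; apply: eq_bigr => a _.
rewrite mulr_sumr; apply: eq_bigr => x _; rewrite mulr_sumr; apply: eq_bigr => o' _.
by rewrite mulr_sumr; apply: eq_bigr => a' _; rewrite traj_prob_snoc mulrA.
Qed.

Lemma traj_expect_last n (h : S -> R) :
  \sum_(s : {ffun 'I_n.+1 -> S}) \sum_(o : {ffun 'I_n -> O}) \sum_(a : {ffun 'I_n -> A})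
     traj_prob p0 pe pt del s o a * h (s ord_max) = \sum_x state_marginal n x * h x.
Proof.
elim: n h => [|n IH] h.
  rewrite sum_snoc exchange_big; apply: eq_bigr => x _.
  rewrite !(sum_ffun_ord0 _ (ffun0 (card_ord 0))) /traj_prob big_ord0 mulr1.
  have -> : ord0 = ord_max :> 'I_1 by apply: val_inj.
  by rewrite snoc_last.
rewrite traj_expect_snoc.
under eq_bigr => s _ do under eq_bigr => o _ do under eq_bigr => a _ do
  under eq_bigr => x _ do under eq_bigr => o' _ do under eq_bigr => a' _ do
  rewrite snoc_last.
rewrite (IH (fun y => \sum_x \sum_o' \sum_a' step_weight n y o' a' x * h x)) /=.
under eq_bigr => y _ do rewrite mulr_sumr.
under [RHS]eq_bigr => x _ do rewrite mulr_suml.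
rewrite exchange_big; apply: eq_bigr => x _; apply: eq_bigr => y _.
rewrite mulr_sumr mulr_suml; under eq_bigr => o _ do rewrite mulr_sumr.
under [RHS]eq_bigr => a _ do rewrite mulr_sumr mulr_suml.
rewrite [RHS]exchange_big; apply: eq_bigr => o _; apply: eq_bigr => a _.
by rewrite /step_weight; ring.
Qed.

Lemma step_weight_sum1 t y : (t < T)%N ->
  \sum_x \sum_o \sum_a step_weight t y o a x = 1.
Proof.
move=> tT; rewrite exchange_big -(pe_sum1 y); apply: eq_bigr => o _.
rewrite exchange_big -[RHS]mulr1 -(del_sum1 tT o) mulr_sumr; apply: eq_bigr => a _.
by rewrite -mulr_sumr pt_sum1 mulr1.
Qed.

Lemma step_weight_average t y (c : R) : (t < T)%N ->
  \sum_x \sum_o \sum_a step_weight t y o a x * c = c.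
Proof.
move=> tT; rewrite -[RHS]mul1r -(step_weight_sum1 y tT) mulr_suml.
by apply: eq_bigr => x _; rewrite mulr_suml; apply: eq_bigr => o _; rewrite mulr_suml.
Qed.

Lemma traj_expect_transition n : (n <= T)%N ->
  forall (t : 'I_n) (g : S -> A -> S -> R),
  \sum_(s : {ffun 'I_n.+1 -> S}) \sum_(o : {ffun 'I_n -> O}) \sum_(a : {ffun 'I_n -> A})
     traj_prob p0 pe pt del s o a * g (s (widen_ord (leqnSn n) t)) (a t) (s (lift ord0 t))
  = \sum_x \sum_y \sum_z g x y z * transition_marginal t x y z.
Proof.
elim: n => [|n IH] nT; first by case.
move=> t g; rewrite traj_expect_snoc; case: (unliftP ord_max t) => [j ->|->].
  under eq_bigr => s _ do under eq_bigr => o _ do under eq_bigr => a _ do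
    under eq_bigr => x _ do under eq_bigr => o' _ do under eq_bigr => a' _ do
    rewrite -widen_ord_lift_max !snoc_widen snoc_next.
  under eq_bigr => s _ do under eq_bigr => o _ do under eq_bigr => a _ do
    rewrite (step_weight_average _ _ nT).
  rewrite lift_max.
  exact: IH (ltnW nT) j g.
under eq_bigr => s _ do under eq_bigr => o _ do under eq_bigr => a _ do
  under eq_bigr => x _ do under eq_bigr => o' _ do under eq_bigr => a' _ do
  rewrite snoc_widen snoc_next_last !snoc_last.
rewrite (traj_expect_last n (fun y => \sum_x \sum_o' \sum_a' step_weight n y o' a' x * g y a' x)).
apply: eq_bigr => y _; rewrite mulr_sumr.
under eq_bigr => x _ do rewrite mulr_sumr.
under eq_bigr => x _ do under eq_bigr => o _ do rewrite mulr_sumr.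
under eq_bigr => x _ do rewrite exchange_big.
rewrite exchange_big; apply: eq_bigr => a _; apply: eq_bigr => x _.
rewrite /transition_marginal !mulr_sumr; apply: eq_bigr => o _.
by rewrite /step_weight; ring.
Qed.

Lemma policy_value_transitions : policy_value p0 pe pt rw T del =
  \sum_(t < T) \sum_x \sum_y \sum_z rw x y z * transition_marginal t x y z.
Proof.
rewrite /policy_value.
under eq_bigr => s _ do under eq_bigr => o _ do under eq_bigr => a _ do rewrite mulr_sumr.
under eq_bigr => s _ do under eq_bigr => o _ do rewrite exchange_big.
under eq_bigr => s _ do rewrite exchange_big.
rewrite exchange_big; apply: eq_bigr => t _.
exact: traj_expect_transition (leqnn T) t rw.
Qed.

Lemma state_marginal_ge0 t : (t <= T)%N -> forall s, 0 <= state_marginal t s.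
Proof.
elim: t => [|t IH] tT s /=; first exact: p0_ge0.
apply: sumr_ge0 => x _; apply: sumr_ge0 => a _; rewrite mulr_ge0 ?pt_ge0 //.
apply: sumr_ge0 => o _; rewrite !mulr_ge0 ?pe_ge0 ?del_ge0 //.
exact: IH (ltnW tT) x.
Qed.

Lemma state_marginal_sum1 t : (t <= T)%N -> \sum_s state_marginal t s = 1.
Proof.
elim: t => [|t IH] tT /=; first exact: p0_sum1.
rewrite exchange_big -(IH (ltnW tT)); apply: eq_bigr => x _.
rewrite exchange_big; under eq_bigr => a _ do rewrite -mulr_suml pt_sum1 mul1r.
rewrite exchange_big -[RHS]mulr1 -(pe_sum1 x) mulr_sumr; apply: eq_bigr => o _.
by rewrite -mulr_sumr del_sum1 // mulr1 mulrC.
Qed.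

Lemma transition_marginal_sum1 t : (t < T)%N ->
  \sum_x \sum_y \sum_z transition_marginal t x y z = 1.
Proof.
move=> tT; rewrite -(state_marginal_sum1 tT) /=.
by under eq_bigr => x _ do rewrite exchange_big; rewrite exchange_big.
Qed.
End PolicyDynamics.

Section McCormick.
Variable R : realFieldType.

Lemma mccormick_product (p d : R) : 0 <= p <= 1 -> d = 0 \/ d = 1 ->
  [/\ 0 <= p * d, p * d <= p, p * d <= d & p + d - 1 <= p * d].
Proof. by case/andP=> p0 p1 [] ->; rewrite ?mulr0 ?mulr1; split; lra. Qed.

Lemma mccormick_tight (tau p d : R) : d = 0 \/ d = 1 -> 0 <= tau ->
  tau <= p -> tau <= d -> p + d - 1 <= tau -> tau = p * d.
Proof. by case=> -> *; rewrite ?mulr0 ?mulr1; lra. Qed.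
End McCormick.

Section QdPoints.
Variable R : realFieldType.
Variables (S O A : finType).
Variables (p0 : S -> R) (pe : S -> O -> R) (pt : S -> A -> S -> R).
Variables (T : nat) (x : Qvars R S O A).
Hypothesis Hpomdp : is_pomdp p0 pe pt.
Hypothesis Hx : in_Qd p0 pe pt T x.

Lemma Qd_policy : memoryless_policy T (q_del x) /\ deterministic_policy T (q_del x).
Proof.
have [Hdet _] := Hx; split => t tT o; last exact: (proj1 (Hdet t tT o)).
by have [H01 ->] := Hdet t tT o; split => // a; case: (H01 a) => ->.
Qed.

Lemma Qd_tsoa_eq t : (t < T)%N -> forall s o a,
  q_tsoa x t s o a = pe s o * q_nu x t s * q_del x t o a.
Proof.
move=> tT s o a; have [_ [_ [Htsoa [_ [_ [_ [_ [_ Hmc]]]]]]]] := Hx.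
have [le_p [le_d ge_pd]] := Hmc t tT s o a.
exact: mccormick_tight ((proj2 Qd_policy) t tT o a) (Htsoa t tT s o a) le_p le_d ge_pd.
Qed.

Lemma Qd_tsas_of_nu t : (t < T)%N ->
  q_nu x t =1 state_marginal p0 pe pt (q_del x) t ->
  forall s a s', q_tsas x t s a s' = transition_marginal p0 pe pt (q_del x) t s a s'.
Proof.
move=> tT Hnu s a s'; have [_ [_ [_ [_ [_ [_ [out_flow [trans _]]]]]]]] := Hx.
rewrite (trans t tT) (out_flow t tT) /transition_marginal; congr (_ * _).
by apply: eq_bigr => o _; rewrite Qd_tsoa_eq // Hnu.
Qed.

Lemma Qd_nu_eq t : (t <= T)%N -> q_nu x t =1 state_marginal p0 pe pt (q_del x) t.
Proof.
elim: t => [|t IH] tT s; first by have [_ [_ [_ [_ [init _]]]]] := Hx; rewrite /= init.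
by apply: eq_bigr => y _; apply: eq_bigr => a _; rewrite (Qd_tsas_of_nu tT (IH (ltnW tT))).
Qed.

Lemma Qd_tsas_eq t : (t < T)%N -> forall s a s',
  q_tsas x t s a s' = transition_marginal p0 pe pt (q_del x) t s a s'.
Proof. by move=> tT; apply: Qd_tsas_of_nu tT (Qd_nu_eq (ltnW tT)). Qed.

Definition obs_law t o := \sum_s pe s o * q_nu x t s.

Lemma obs_law_distr t : (t < T)%N ->
  (forall o, 0 <= obs_law t o) /\ \sum_o obs_law t o = 1.
Proof.
move=> tT; have Hmem := proj1 Qd_policy.
split=> [o|]; first apply: sumr_ge0 => s _.
  rewrite Qd_nu_eq ?(ltnW tT) // mulr_ge0 ?(pe_ge0 Hpomdp) //.
  exact: (state_marginal_ge0 Hpomdp Hmem (ltnW tT)).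
rewrite exchange_big -(state_marginal_sum1 Hpomdp Hmem (ltnW tT)); apply: eq_bigr => s _.
by rewrite -mulr_suml (pe_sum1 Hpomdp) mul1r Qd_nu_eq // ltnW.
Qed.

Lemma Qd_expected_usage t (c : A -> R) : (t < T)%N ->
  \sum_a c a * (\sum_s \sum_o q_tsoa x t s o a) =
  \sum_o obs_law t o * (\sum_a c a * q_del x t o a).
Proof.
move=> tT; under eq_bigr => a _ do under eq_bigr => s _ do
  under eq_bigr => o _ do rewrite (Qd_tsoa_eq tT).
under eq_bigr => a _ do rewrite exchange_big mulr_sumr.
rewrite exchange_big; apply: eq_bigr => o _.
rewrite /obs_law mulr_suml; under [RHS]eq_bigr => s _ do rewrite mulr_sumr.
rewrite [RHS]exchange_big; apply: eq_bigr => a _.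
by rewrite mulr_sumr; apply: eq_bigr => s _; ring.
Qed.
End QdPoints.

Section PolicyPoint.
Variable R : realFieldType.
Variables (S O A : finType).
Variables (p0 : S -> R) (pe : S -> O -> R) (pt : S -> A -> S -> R).
Variables (T : nat) (del : nat -> O -> A -> R).
Hypothesis Hpomdp : is_pomdp p0 pe pt.
Hypothesis Hmem : memoryless_policy T del.
Hypothesis Hdet : deterministic_policy T del.

Definition policy_point : Qvars R S O A :=
  mkQvars p0 (fun t s o a => pe s o * state_marginal p0 pe pt del t s * del t o a)
    (transition_marginal p0 pe pt del) del.

Lemma policy_point_nu t : q_nu policy_point t =1 state_marginal p0 pe pt del t.
Proof. by case: t. Qed.

Lemma policy_point_in_Qd : in_Qd p0 pe pt T policy_point.
Proof.
have nu01 t s o : (t < T)%N -> 0 <= pe s o * state_marginal p0 pe pt del t s <= 1.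
  move=> tT; have nu_ge0 := state_marginal_ge0 Hpomdp Hmem (ltnW tT).
  rewrite mulr_ge0 ?(pe_ge0 Hpomdp) //=; apply: mulr_ile1; rewrite ?(pe_ge0 Hpomdp) //.
    by rewrite -(pe_sum1 Hpomdp s); apply: le_sum_term; exact: pe_ge0 Hpomdp s.
  by rewrite -(state_marginal_sum1 Hpomdp Hmem (ltnW tT)); exact: le_sum_term.
have flow_sum t s a : \sum_sb transition_marginal p0 pe pt del t s a sb =
    \sum_o pe s o * state_marginal p0 pe pt del t s * del t o a.
  by rewrite /transition_marginal -mulr_suml (pt_sum1 Hpomdp) mul1r.
split; first by move=> t tT o /=; split; [exact: Hdet | exact: (del_sum1 Hmem tT o)].
split; first exact: p0_ge0 Hpomdp.
split.
  by move=> t tT s o a; have [] := mccormick_product (nu01 t s o tT) (Hdet tT o a).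
split.
  move=> t tT s a s'; rewrite /= /transition_marginal mulr_ge0 ?(pt_ge0 Hpomdp) //.
  by apply: sumr_ge0 => o _; have [] := mccormick_product (nu01 t s o tT) (Hdet tT o a).
split; first by [].
split.
  move=> t tT s; rewrite policy_point_nu /= -[RHS]mulr1 -(pe_sum1 Hpomdp s) mulr_sumr.
  by apply: eq_bigr => o _; rewrite -mulr_sumr (del_sum1 Hmem tT) mulr1 mulrC.
split; first by move=> t tT s a /=; rewrite flow_sum.
split; first by move=> t tT s a s' /=; rewrite flow_sum.
move=> t tT s o a /=; rewrite policy_point_nu.
by have [] := mccormick_product (nu01 t s o tT) (Hdet tT o a).
Qed.
End PolicyPoint.

Section WeaklyCoupled.
Variable R : realFieldType.
Variables (M q : nat) (S O A : 'I_M -> finType).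
Variables (p0 : forall m, S m -> R) (pe : forall m, S m -> O m -> R)
          (pt : forall m, S m -> A m -> S m -> R)
          (rw : forall m, S m -> A m -> S m -> R)
          (D : forall m, A m -> 'I_q -> R) (b : 'I_q -> R).
Variable T : nat.
Hypothesis Hpomdp : forall m, is_pomdp (@p0 m) (@pe m) (@pt m).

Local Notation fp0 := (full_p0 p0).
Local Notation fpe := (full_pe pe).
Local Notation fpt := (@full_pt R M q S A pt D b).
Local Notation frw := (@full_rw R M q S A rw D b).
Local Notation prod_policy := (@product_policy R M q S O A D b).

Lemma sum_XA (F : jact A -> R) : (forall a, ~~ feasible_action D b a -> F a = 0) ->
  \sum_(a : XA D b) F (val a) = \sum_(a : jact A) F a.
Proof.
move=> F0; rewrite [RHS](bigID (feasible_action D b)) /= [X in _ + X]big1 ?addr0 //.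
rewrite (reindex_omap (val : XA D b -> jact A) insub) => [|a Fa]; last by rewrite insubT.
by apply: eq_bigl => a; rewrite valP valK eqxx.
Qed.

Lemma full_is_pomdp : is_pomdp fp0 fpe fpt.
Proof.
split; [split | split].
- by move=> s; apply: prodr_ge0 => m _; exact: p0_ge0.
- by rewrite (sum_dffun_prod p0); apply: big1 => m _; exact: p0_sum1.
- move=> s; split; first by move=> o; apply: prodr_ge0 => m _; exact: pe_ge0.
  by rewrite (sum_dffun_prod (fun m => @pe m (s m))); apply: big1 => m _; exact: pe_sum1.
- move=> s a; split; first by move=> s'; apply: prodr_ge0 => m _; exact: pt_ge0.
  rewrite (sum_dffun_prod (fun m => @pt m (s m) (val a m))).
  by apply: big1 => m _; exact: pt_sum1.
Qed.

Definition infeasible_blocked (x : sol R S O A) (t : nat) :=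
  forall a : jact A, ~~ feasible_action D b a ->
    exists m, forall o, q_del (x m) t o (a m) = 0.

(* In a point of Q^d every component policy is deterministic, so for each
   observation it plays a single action; the (LB) constraint for the joint
   observation where every component plays its part of a forbids any
   infeasible a. *)
Lemma LB_feasible_blocked (x : sol R S O A) : LB_feasible p0 pe pt D b T x ->
  forall t, (t < T)%N -> infeasible_blocked x t.
Proof.
move=> [HQ HLB] t tT a a_infeas.
case: (boolP [exists m, [forall o, q_del (x m) t o (a m) == 0]]).
  by case/existsP=> m /forallP blocked; exists m => o; apply/eqP.
rewrite negb_exists => /forallP unblocked.
have plays m : exists o, q_del (x m) t o (a m) != 0.
  by have := unblocked m; rewrite negb_forall => /existsP.
pose o_a : jobs O := finfun (fun m => xchoose (plays m)).
have Hmem m := proj1 (Qd_policy (HQ m)); have Hdet m := proj2 (Qd_policy (HQ m)).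
have point m y : q_del (x m) t (o_a m) y = (y == a m)%:R.
  have [ge0 sum1] := Hmem m t tT (o_a m).
  apply: point_mass => //; rewrite ffunE; have := xchooseP (plays m).
  by case: (Hdet m t tT (xchoose (plays m)) (a m)) => -> //; rewrite eqxx.
exfalso; move/negP: a_infeas; apply; apply/forallP => i; have := HLB o_a t tT i.
under eq_bigr => m _ do under eq_bigr => y _ do rewrite point.
by under eq_bigr => m _ do rewrite sum_mul_point_mass.
Qed.

Section ProductPolicy.
Variable x : sol R S O A.
Hypothesis HQ : forall m, in_Qd (@p0 m) (@pe m) (@pt m) T (x m).
Hypothesis Hblock : forall t, (t < T)%N -> infeasible_blocked x t.

Let comp_memoryless m := proj1 (Qd_policy (HQ m)).
Let comp_deterministic m := proj2 (Qd_policy (HQ m)).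

Lemma product_policy_infeasible t : (t < T)%N -> forall (o : jobs O) (a : jact A),
  ~~ feasible_action D b a -> \prod_m q_del (x m) t (o m) (a m) = 0.
Proof.
move=> tT o a a_infeas; have [m Hm] := Hblock tT a_infeas.
by rewrite (bigD1 m) //= Hm mul0r.
Qed.

(* The product of the component policies is a memoryless policy of the full
   system: by blocking, it puts no mass outside X_A. *)
Lemma product_policy_memoryless : full_policy T (prod_policy x).
Proof.
move=> t tT o; split.
  move=> a; apply: prodr_ge0 => m _.
  by case: (comp_deterministic tT (o m) (val a m)) => ->.
rewrite /product_policy (sum_XA (product_policy_infeasible tT o)).
rewrite (sum_dffun_prod (fun m => q_del (x m) t (o m))).
by apply: big1 => m _; case: (comp_memoryless tT (o m)).
Qed.

Lemma product_policy_deterministic : deterministic_policy T (prod_policy x).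
Proof.
move=> t tT o a; apply: (big_ind (fun v : R => v = 0 \/ v = 1)); first by right.
  by move=> u v [->|->] [->|->]; rewrite ?mulr0 ?mul0r ?mulr1; [left|left|left|right].
by move=> m _; exact: comp_deterministic.
Qed.

Lemma product_policy_decomposable : decomposable T (prod_policy x).
Proof. by exists (fun m => q_del (x m)); split => // m; exact: @comp_memoryless m. Qed.

Section FullDynamics.
Variable del : nat -> jobs O -> XA D b -> R.
Hypothesis Hdelta : forall t, (t < T)%N -> forall o a, del t o a = prod_policy x t o a.

Let del_memoryless : memoryless_policy T del.
Proof.
move=> t tT o; have [ge0 sum1] := product_policy_memoryless tT o.
split; first by move=> a; rewrite Hdelta.
by rewrite -sum1; apply: eq_bigr => a _; rewrite Hdelta.
Qed.

Local Notation comp_sm m := (state_marginal (@p0 m) (@pe m) (@pt m) (q_del (x m))).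
Local Notation comp_tm m := (transition_marginal (@p0 m) (@pe m) (@pt m) (q_del (x m))).

Lemma full_transition_prod t : (t < T)%N ->
  (forall s, state_marginal fp0 fpe fpt del t s = \prod_m comp_sm m t (s m)) ->
  forall s a s', transition_marginal fp0 fpe fpt del t s a s' =
                 \prod_m comp_tm m t (s m) (val a m) (s' m).
Proof.
move=> tT Hnu s a s'; rewrite /transition_marginal big_split; congr (_ * _).
rewrite -(sum_dffun_prod (fun m y =>
  @pe m (s m) y * comp_sm m t (s m) * q_del (x m) t y (val a m))).
by apply: eq_bigr => o _; rewrite Hnu (Hdelta tT) -!big_split.
Qed.

Lemma comp_transitions_blocked t : (t < T)%N -> forall (a : jact A),
  ~~ feasible_action D b a -> forall s s', \prod_m comp_tm m t (s m) (a m) (s' m) = 0.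
Proof.
move=> tT a a_infeas s s'; have [m Hm] := Hblock tT a_infeas.
rewrite (bigD1 m) //= /transition_marginal.
by rewrite big1 ?mulr0 ?mul0r // => o _; rewrite Hm mulr0.
Qed.

Lemma full_state_prod t : (t <= T)%N ->
  forall s, state_marginal fp0 fpe fpt del t s = \prod_m comp_sm m t (s m).
Proof.
elim: t => [|t IH] tT s' //=.
under eq_bigr => s _ do under eq_bigr => a _ do
  rewrite -/(transition_marginal fp0 fpe fpt del t s a s')
          (full_transition_prod tT (IH (ltnW tT))).
under eq_bigr => s _ do rewrite (sum_XA (fun a na => comp_transitions_blocked tT na s s')).
under eq_bigr => s _ do rewrite (sum_dffun_prod (fun m y => comp_tm m t (s m) y (s' m))).
by rewrite (sum_dffun_prod (fun m z => \sum_y comp_tm m t z y (s' m))).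
Qed.

Lemma full_transition_reward t : (t < T)%N ->
  \sum_s \sum_(a : XA D b) \sum_s' frw s a s' * transition_marginal fp0 fpe fpt del t s a s'
  = \sum_m \sum_s \sum_a \sum_s' @rw m s a s' * q_tsas (x m) t s a s'.
Proof.
move=> tT.
under eq_bigr => s _ do under eq_bigr => a _ do under eq_bigr => s' _ do
  rewrite (full_transition_prod tT (full_state_prod (ltnW tT))) /full_rw.
have blocked (s : jstate S) (a : jact A) : ~~ feasible_action D b a ->
    \sum_(s' : jstate S)
      (\sum_m @rw m (s m) (a m) (s' m)) * \prod_m comp_tm m t (s m) (a m) (s' m) = 0.
  by move=> na; apply: big1 => s' _; rewrite comp_transitions_blocked ?mulr0.
under eq_bigr => s _ do rewrite (sum_XA (blocked s)).
under eq_bigr => s _ do under eq_bigr => a _ do under eq_bigr => s' _ do rewrite mulr_suml.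
under eq_bigr => s _ do under eq_bigr => a _ do rewrite exchange_big.
under eq_bigr => s _ do rewrite exchange_big.
rewrite exchange_big; apply: eq_bigr => m0 _.
rewrite (@sum_prod3_marginal _ _ _ _ _ (fun m => comp_tm m t) (fun m => @rw m) m0) => [|m _].
  apply: eq_bigr => s _; apply: eq_bigr => a _; apply: eq_bigr => s' _.
  by rewrite (Qd_tsas_eq (HQ m0) tT).
exact: (transition_marginal_sum1 (Hpomdp m) (@comp_memoryless m) tT).
Qed.

Lemma full_value_product : full_value p0 pe pt rw T del = milp_obj rw T x.
Proof.
rewrite /full_value (policy_value_transitions frw full_is_pomdp del_memoryless).
by apply: eq_bigr => -[t tT] _; exact: full_transition_reward.
Qed.
End FullDynamics.
End ProductPolicy.

(* (LB) implies (IP): the expected usage of each component is an average of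
   its usage at single observations, so the expected total usage is bounded
   by the total usage at a worst-case joint observation, which (LB) bounds. *)
Lemma LB_feasible_IP_feasible (x : sol R S O A) :
  LB_feasible p0 pe pt D b T x -> IP_feasible p0 pe pt D b T x.
Proof.
move=> [HQ HLB]; split => // t tT i.
pose usage m (o : O m) := \sum_a D a i * q_del (x m) t o a.
have worst m : exists o, \sum_o' obs_law (@pe m) (x m) t o' * usage m o' <= usage m o.
  by have [] := obs_law_distr (Hpomdp m) (HQ m) tT; exact: convex_comb_le_max.
pose o_worst : jobs O := finfun (fun m => xchoose (worst m)).
apply: le_trans (HLB o_worst t tT i); apply: ler_sum => m _.
by rewrite (Qd_expected_usage (HQ m)) // ffunE; exact: xchooseP (worst m).
Qed.

Section DecomposablePolicy.
Variable delta : nat -> jobs O -> XA D b -> R.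
Variable delm : forall m, nat -> O m -> A m -> R.
Hypothesis Hfull : full_policy T delta.
Hypothesis Hdet : deterministic_policy T delta.
Hypothesis Hmem : forall m, memoryless_policy T (@delm m).
Hypothesis Hprod : forall t, (t < T)%N -> forall o a,
  delta t o a = \prod_m @delm m t (o m) (val a m).

(* At each joint observation the policy plays some feasible joint action a
   with probability one, so each component plays its part of a surely. *)
Lemma decomposable_selects t : (t < T)%N -> forall o : jobs O,
  exists a : XA D b, forall m, @delm m t (o m) (val a m) = 1.
Proof.
move=> tT o; have [_ sum1] := Hfull tT o.
have [a played] := nonzero_term_of_sum1 sum1.
have delta1 : delta t o a = 1 by case: (Hdet tT o a) played => ->; rewrite ?eqxx.
exists a; apply: prod_unit_interval_eq1; last by rewrite -(Hprod tT).
move=> m; have [ge0 sum1m] := @Hmem m t tT (o m).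
by rewrite ge0 /= -sum1m; exact: le_sum_term.
Qed.

(* Every component policy is then deterministic: it plays surely the action
   selected at a joint observation extending its own. *)
Lemma decomposable_components_deterministic m : deterministic_policy T (@delm m).
Proof.
move=> t tT y z.
have some_obs m' : exists o : O m', true.
  have [s0 _] := nonzero_term_of_sum1 (p0_sum1 (Hpomdp m')).
  by have [o _] := nonzero_term_of_sum1 (pe_sum1 (Hpomdp m') s0); exists o.
pose o_y : jobs O := finfun (dfwith (fun m' => xchoose (some_obs m')) y).
have [a Ha] := decomposable_selects tT o_y.
have := Ha m; rewrite ffunE dfwith_in => played.
have [ge0 sum1] := @Hmem m t tT y.
by rewrite (point_mass ge0 sum1 played z); case: eqP; [right | left].
Qed.

Definition decomposable_point : sol R S O A :=
  fun m => policy_point (@p0 m) (@pe m) (@pt m) (@delm m).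

Lemma decomposable_point_LB_feasible : LB_feasible p0 pe pt D b T decomposable_point.
Proof.
split=> [m | o t tT i].
  exact: (policy_point_in_Qd (Hpomdp m) (@Hmem m) (@decomposable_components_deterministic m)).
have [a Ha] := decomposable_selects tT o.
have point m := point_mass (proj1 (@Hmem m t tT (o m))) (proj2 (@Hmem m t tT (o m))) (Ha m).
rewrite /decomposable_point /=.
under eq_bigr => m _ do under eq_bigr => y _ do rewrite point.
under eq_bigr => m _ do rewrite sum_mul_point_mass.
by have /forallP := valP a; apply.
Qed.

Lemma decomposable_value :
  full_value p0 pe pt rw T delta = milp_obj rw T decomposable_point.
Proof.
have HLB := decomposable_point_LB_feasible.
exact: (full_value_product (proj1 HLB) (LB_feasible_blocked HLB) Hprod).
Qed.
End DecomposablePolicy.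
End WeaklyCoupled.

Theorem mainTheorem5
  (R : realFieldType) (M q : nat) (S O A : 'I_M -> finType)
  (p0 : forall m, S m -> R) (pe : forall m, S m -> O m -> R)
  (pt : forall m, S m -> A m -> S m -> R)
  (rw : forall m, S m -> A m -> S m -> R)
  (D : forall m, A m -> 'I_q -> R) (b : 'I_q -> R) (T : nat)
  (* each component is a POMDP *)
  (Hpomdp : forall m, is_pomdp (@p0 m) (@pe m) (@pt m))
  (* b >= 0 *)
  (Hb : forall i, 0 <= b i)
  (* X_A nonempty *)
  (HXA : exists a : jact A, feasible_action D b a)
  (* (tau^m, delta^m)_m optimal solution of MILP (LB) *)
  (xopt : sol R S O A)
  (Hfeas : LB_feasible p0 pe pt D b T xopt)
  (Hopt : forall x : sol R S O A, LB_feasible p0 pe pt D b T x ->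
            milp_obj rw T x <= milp_obj rw T xopt) :
  let delta := @product_policy R M q S O A D b xopt in
  (* delta is an optimal deterministic decomposable memoryless policy *)
  (full_policy T delta /\ deterministic_policy T delta /\ decomposable T delta /\
   forall delta' : nat -> jobs O -> XA D b -> R,
     full_policy T delta' -> deterministic_policy T delta' ->
     decomposable T delta' ->
     full_value p0 pe pt rw T delta' <= full_value p0 pe pt rw T delta) /\
  (* (IP) is a relaxation of (LB) *)
  (forall x : sol R S O A, LB_feasible p0 pe pt D b T x -> IP_feasible p0 pe pt D b T x) /\
  (* z_LB <= v*_ml *)
  (exists delta' : nat -> jobs O -> XA D b -> R,
     full_policy T delta' /\ milp_obj rw T xopt <= full_value p0 pe pt rw T delta') /\
  (* z_LB <= z_IP *)
  (exists x : sol R S O A, IP_feasible p0 pe pt D b T x /\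
     milp_obj rw T xopt <= milp_obj rw T x).
Proof.
move=> delta; have [HQ _] := Hfeas; have Hblock := LB_feasible_blocked Hfeas.
have delta_policy : full_policy T delta := product_policy_memoryless HQ Hblock.
have delta_det : deterministic_policy T delta := product_policy_deterministic HQ.
have delta_dec : decomposable T delta := product_policy_decomposable D b HQ.
have delta_value : full_value p0 pe pt rw T delta = milp_obj rw T xopt.
  by apply: (full_value_product rw Hpomdp HQ Hblock).
have LB_IP := LB_feasible_IP_feasible Hpomdp.
split; [split; [|split; [|split]] | split; [exact: LB_IP | split]] => //.
- (* a competing policy is the product policy of some (LB) point *)
  move=> delta' Hfull Hdet [delm [Hmem Hprod]].
  rewrite delta_value (decomposable_value rw Hpomdp Hfull Hdet Hmem Hprod).
  exact/Hopt/(decomposable_point_LB_feasible Hpomdp Hfull Hdet Hmem Hprod).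
- by exists delta; rewrite delta_value.
- by exists xopt; split; [exact: LB_IP |].
Qed.
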